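(* Let $p,q$ be positive integers with $\gcd(p,q)=2$. On the square billiard, consider the billiard trajectory generated by $\langle P_0,\alpha_0\rangle$ with $\tan(\alpha_0)=p/q$ fixed and $P_0\in[0,1)$. Then: (i) if $P_0=\frac{2\ell}{p}$ for some $\ell\in\{0,1,\dots,\frac{p}{2}-1\}$, the trajectory is a singular orbit, and it lies on a generalised diagonal of length $\frac{p+q}{2}-2$ having exactly $\frac{p}{2}-1$ collision points on the sides $\mathsf{AB}$ or $\mathsf{CD}$ and exactly $\frac{q}{2}-1$ collision points on the sides $\mathsf{BC}$ or $\mathsf{DA}$; (ii) otherwise the trajectory is a periodic orbit of period $p+q$ belonging to the class $\mathcal{C}_{p+q}(p)$.
   Context: Square billiard: unit square with vertices $\mathsf{A}=(0,0),\mathsf{B}=(1,0),\mathsf{C}=(1,1),\mathsf{D}=(0,1)$; a point moves in straight lines, reflecting elastically at the sides; a trajectory reaching a vertex terminates (singular orbit). A pair $\langle P_0,\alpha_0\rangle$ generates the trajectory with a collision at $(P_0,0)$ on $\mathsf{AB}$ whose outgoing segment makes angle $\alpha_0\in(0,\pi/2]$ with $\mathsf{AB}$ (direction of motion not distinguished; for $P_0=0$ the trajectory starts at vertex $\mathsf{A}$). Period of a periodic orbit = number of distinct collision points. The class $\mathcal{C}_K(p)$ consists of all period-$K$ orbits with exactly $p$ distinct collision points on $\mathsf{AB}$ or $\mathsf{CD}$ (and $K-p$ on $\mathsf{BC}$ or $\mathsf{DA}$). A generalised diagonal is a singular orbit starting at a vertex; its length is the number of its non-vertex collision points. *)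

From Stdlib Require Import Reals ZArith Arith List.
Open Scope R_scope.

Definition is_int (x : R) : Prop := exists z : Z, x = IZR z.

(* The square billiard is obtained by folding straight lines in the plane
   (standard unfolding): reflection at the sides x=0,1 / y=0,1 corresponds
   to the triangle wave below. *)
Definition fold (x : R) : R :=
  let m := x - 2 * IZR (Int_part (x / 2)) in
  if Rle_dec m 1 then m else 2 - m.

(* An (unfolded) billiard path: a straight line t |-> (px + t dc, py + t ds)
   in the plane, restricted to the set of times [dom]. *)
Record path := mkPath { px : R; py : R; dc : R; ds : R; dom : R -> Prop }.

Definition point (g : path) (t : R) : R * R :=
  (fold (px g + t * dc g), fold (py g + t * ds g)).

Definition vtime (x0 y0 c s t : R) : Prop :=
  is_int (x0 + t * c) /\ is_int (y0 + t * s).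
Definition ctime (x0 y0 c s t : R) : Prop :=
  is_int (x0 + t * c) \/ is_int (y0 + t * s).

(* The trajectory generated by <P0, alpha0>: collision at (P0,0) with outgoing
   direction (cos alpha0, sin alpha0); both directions of motion are included,
   and the trajectory terminates when it reaches a vertex.  If P0 = 0 it
   starts at the vertex A and only the outgoing part is kept. *)
Definition traj (P0 alpha0 : R) : path :=
  mkPath P0 0 (cos alpha0) (sin alpha0)
    (fun t =>
       (0 <= t /\ forall s, 0 < s < t -> ~ vtime P0 0 (cos alpha0) (sin alpha0) s)
    \/ (t <= 0 /\ ~ vtime P0 0 (cos alpha0) (sin alpha0) 0 /\
        forall s, t < s < 0 -> ~ vtime P0 0 (cos alpha0) (sin alpha0) s)).

Definition diag (m n : Z) (theta : R) : path :=
  mkPath (IZR m) (IZR n) (cos theta) (sin theta)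
    (fun t => 0 <= t /\
       forall s, 0 < s < t -> ~ vtime (IZR m) (IZR n) (cos theta) (sin theta) s).

Definition is_vtime (g : path) (t : R) := vtime (px g) (py g) (dc g) (ds g) t.
Definition is_ctime (g : path) (t : R) := ctime (px g) (py g) (dc g) (ds g) t.

Definition points (g : path) (z : R * R) : Prop :=
  exists t, dom g t /\ z = point g t.

Definition coll_points (g : path) (z : R * R) : Prop :=
  exists t, dom g t /\ is_ctime g t /\ z = point g t.

Definition is_vertex (z : R * R) : Prop :=
  (fst z = 0 \/ fst z = 1) /\ (snd z = 0 \/ snd z = 1).

Definition ncoll (g : path) (z : R * R) : Prop :=
  coll_points g z /\ ~ is_vertex z.
(* non-vertex collision points on AB or CD *)
Definition hcoll (g : path) (z : R * R) : Prop :=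
  coll_points g z /\ (snd z = 0 \/ snd z = 1) /\ ~ is_vertex z.
(* non-vertex collision points on BC or DA *)
Definition vcoll (g : path) (z : R * R) : Prop :=
  coll_points g z /\ (fst z = 0 \/ fst z = 1) /\ ~ is_vertex z.

Definition card_eq (S : R * R -> Prop) (n : nat) : Prop :=
  exists l : list (R * R), NoDup l /\ length l = n /\ forall z, In z l <-> S z.

Definition singular (g : path) : Prop :=
  exists t, dom g t /\ is_vtime g t.

Definition is_gen_diag (g : path) : Prop :=
  exists (m n : Z) (theta : R), cos theta <> 0 /\ sin theta <> 0 /\ g = diag m n theta.

Definition gd_length (g : path) (n : nat) : Prop := card_eq (ncoll g) n.

Definition periodic (g : path) : Prop :=
  ~ singular g /\
  exists T, 0 < T /\ forall t, dom g t -> dom g (t + T) /\ point g (t + T) = point g t.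

(* class C_K(p): period-K periodic orbits (K distinct collision points) with
   exactly p collision points on AB or CD and K-p on BC or DA *)
Definition in_class (K p : nat) (g : path) : Prop :=
  periodic g /\ card_eq (coll_points g) K /\
  card_eq (hcoll g) p /\ card_eq (vcoll g) (K - p).

(* Unfolding the square, the trajectory becomes the line through (P0, 0) with direction (b, a),
   where p = 2a, q = 2b and gcd(a, b) = 1, seen through the folding map; its collision points
   are the folded crossings with the lines x = r and y = r.  Since a x - b y is constant along
   the line, it meets the lattice Z^2 iff a P0 is an integer, i.e. iff P0 = 2l/p.
   If not, the trajectory never reaches a vertex and closes up after 2b vertical and 2a
   horizontal crossings; two of these fold to the same point only if their indices agree
   modulo 2b (resp. 2a) or if a P0 is an integer, so there are p + q collision points.
   If so, the trajectory lies on the segment joining two consecutive lattice points (m, n) and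
   (m + b, n + a), a generalised diagonal whose interior crosses b - 1 vertical and a - 1
   horizontal lines, and folding identifies none of them: a symmetric pair would force both a
   and b to be even. *)

From Stdlib Require Import Reals ZArith List Lia Lra Znumtheory FinFun.
Open Scope R_scope.

Definition congr_pm2 (x y : R) : Prop :=
  exists z : Z, x - y = 2 * IZR z \/ x + y = 2 * IZR z.

Lemma congr_pm2_sym {x y} : congr_pm2 x y -> congr_pm2 y x.
Proof.
  intros [z [H|H]]; [exists (- z)%Z; left; rewrite opp_IZR | exists z; right]; lra.
Qed.

Lemma congr_pm2_trans {x y w} : congr_pm2 x y -> congr_pm2 y w -> congr_pm2 x w.
Proof.
  intros [z1 [H1|H1]] [z2 [H2|H2]];
    [exists (z1 + z2)%Z; left | exists (z1 + z2)%Z; right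
    | exists (z1 - z2)%Z; right | exists (z1 - z2)%Z; left];
    rewrite ?plus_IZR, ?minus_IZR; lra.
Qed.

Lemma fold_range_congr x : 0 <= fold x <= 1 /\ congr_pm2 x (fold x).
Proof.
  unfold fold; destruct (base_Int_part (x / 2)) as [H1 H2].
  set (z := Int_part (x / 2)) in *.
  destruct (Rle_dec (x - 2 * IZR z) 1).
  - split; [lra | exists z; left; lra].
  - split; [lra | exists (z + 1)%Z; right; rewrite plus_IZR; lra].
Qed.

Lemma congr_pm2_unit_eq r r' : 0 <= r <= 1 -> 0 <= r' <= 1 -> congr_pm2 r r' -> r = r'.
Proof.
  intros Hr Hr' [z [H|H]].
  - assert (IZR (-1) < IZR z < IZR 1) as [Hlo Hhi] by lra.
    apply lt_IZR in Hlo; apply lt_IZR in Hhi.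
    replace z with 0%Z in H by lia; simpl in H; lra.
  - assert (IZR (-1) < IZR z < IZR 2) as [Hlo Hhi] by lra.
    apply lt_IZR in Hlo; apply lt_IZR in Hhi.
    assert (z = 0%Z \/ z = 1%Z) as [-> | ->] by lia; simpl in H; lra.
Qed.

Lemma fold_eq_iff x y : fold x = fold y <-> congr_pm2 x y.
Proof.
  destruct (fold_range_congr x) as [Hx Ex], (fold_range_congr y) as [Hy Ey]; split.
  - intros Hxy; rewrite <- Hxy in Ey.
    exact (congr_pm2_trans Ex (congr_pm2_sym Ey)).
  - intros Exy; apply congr_pm2_unit_eq; auto.
    exact (congr_pm2_trans (congr_pm2_sym Ex) (congr_pm2_trans Exy Ey)).
Qed.

Lemma fold_boundary_iff x : is_int x <-> fold x = 0 \/ fold x = 1.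
Proof.
  destruct (fold_range_congr x) as [Hx [z Ez]]; split.
  - intros [n ->].
    assert (exists m, fold (IZR n) = IZR m) as [m Hm].
    { destruct Ez; [exists (n - 2 * z)%Z | exists (2 * z - n)%Z];
        rewrite minus_IZR, mult_IZR; simpl; lra. }
    rewrite Hm in Hx |- *; destruct Hx as [H0 H1].
    apply le_IZR in H0; apply le_IZR in H1.
    assert (m = 0%Z \/ m = 1%Z) as [-> | ->] by lia; auto.
  - intros [H|H]; rewrite H in Ez; destruct Ez;
      [exists (2 * z)%Z | exists (2 * z)%Z | exists (2 * z + 1)%Z | exists (2 * z - 1)%Z];
      rewrite ?plus_IZR, ?minus_IZR, mult_IZR; simpl; lra.
Qed.

Lemma is_vertex_point g t : is_vertex (point g t) <-> is_vtime g t.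
Proof. unfold is_vertex, is_vtime, vtime, point; simpl; rewrite !fold_boundary_iff; tauto. Qed.

Definition zrange (lo hi : Z) : list Z :=
  map (fun i => (lo + Z.of_nat i)%Z) (seq 0 (Z.to_nat (hi - lo))).

Lemma in_zrange lo hi r : In r (zrange lo hi) <-> (lo <= r < hi)%Z.
Proof.
  unfold zrange; rewrite in_map_iff; split.
  - intros [i [<- Hi]]; apply in_seq in Hi; lia.
  - intros Hr; exists (Z.to_nat (r - lo)); rewrite in_seq; split; lia.
Qed.

Lemma length_zrange lo hi : length (zrange lo hi) = Z.to_nat (hi - lo).
Proof. unfold zrange; rewrite length_map, length_seq; reflexivity. Qed.

Lemma NoDup_map_zrange {B} (f : Z -> B) lo hi :
  (forall r r', (lo <= r < hi)%Z -> (lo <= r' < hi)%Z -> f r = f r' -> r = r') ->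
  NoDup (map f (zrange lo hi)).
Proof.
  intros Hf; unfold zrange; rewrite map_map.
  apply NoDup_map_NoDup_ForallPairs; [| apply seq_NoDup].
  intros i j Hi Hj Hij; apply in_seq in Hi; apply in_seq in Hj.
  apply Hf in Hij; lia.
Qed.

Definition on_vside (z : R * R) : Prop := fst z = 0 \/ fst z = 1.
Definition on_hside (z : R * R) : Prop := snd z = 0 \/ snd z = 1.

Definition swap (z : R * R) : R * R := (snd z, fst z).

(* The folded point where the line (X0 + B s, Y0 + A s) crosses x = r, resp. y = r. *)
Definition vcross (X0 Y0 A B : R) (r : Z) : R * R :=
  (fold (IZR r), fold (Y0 + A * (IZR r - X0) / B)).
Definition hcross (X0 Y0 A B : R) (r : Z) : R * R :=
  (fold (X0 + B * (IZR r - Y0) / A), fold (IZR r)).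

Lemma hcross_swap X0 Y0 A B r : hcross X0 Y0 A B r = swap (vcross Y0 X0 B A r).
Proof. reflexivity. Qed.

Lemma map_hcross X0 Y0 A B s :
  map (hcross X0 Y0 A B) s = map swap (map (vcross Y0 X0 B A) s).
Proof. rewrite map_map; reflexivity. Qed.

Lemma NoDup_map_swap l : NoDup l -> NoDup (map swap l).
Proof.
  apply Injective_map_NoDup; intros [x y] [x' y'] H; injection H; intros -> ->; reflexivity.
Qed.

Lemma vcross_at X0 Y0 A B s r : B <> 0 -> X0 + B * s = IZR r ->
  (fold (X0 + B * s), fold (Y0 + A * s)) = vcross X0 Y0 A B r.
Proof. intros HB Hr; unfold vcross; rewrite <- Hr; do 3 f_equal; field; auto. Qed.

Lemma hcross_at X0 Y0 A B s r : A <> 0 -> Y0 + A * s = IZR r ->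
  (fold (X0 + B * s), fold (Y0 + A * s)) = hcross X0 Y0 A B r.
Proof. intros HA Hr; rewrite hcross_swap, <- (vcross_at Y0 X0 B A s r HA Hr); reflexivity. Qed.

Lemma vcross_on_vside X0 Y0 A B r : on_vside (vcross X0 Y0 A B r).
Proof. apply fold_boundary_iff; exists r; reflexivity. Qed.

Lemma hcross_on_hside X0 Y0 A B r : on_hside (hcross X0 Y0 A B r).
Proof. apply fold_boundary_iff; exists r; reflexivity. Qed.

Lemma vcross_mod X0 Y0 (A B r : Z) : (0 < B)%Z ->
  vcross X0 Y0 (IZR A) (IZR B) (r mod (2 * B)) = vcross X0 Y0 (IZR A) (IZR B) r.
Proof.
  intros HB; assert (HBR : IZR B <> 0) by (apply not_0_IZR; lia).
  assert (Hr : (r mod (2 * B) = r + 2 * (- B * (r / (2 * B))))%Z)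
    by (rewrite (Z.div_mod r (2 * B)) at 2 by lia; ring).
  unfold vcross; rewrite Hr, plus_IZR, !mult_IZR, opp_IZR; f_equal; apply fold_eq_iff.
  - exists (- B * (r / (2 * B)))%Z; left; rewrite mult_IZR, opp_IZR; ring.
  - exists (- A * (r / (2 * B)))%Z; left; rewrite mult_IZR, opp_IZR; simpl; field; auto.
Qed.

Lemma vcross_eq_cases X0 Y0 (A B r r' : Z) : IZR B <> 0 ->
  vcross X0 Y0 (IZR A) (IZR B) r = vcross X0 Y0 (IZR A) (IZR B) r' ->
  (exists e, r - r' = 2 * e)%Z /\
  ((exists z, A * (r - r') = 2 * B * z)%Z \/
   exists z : Z, IZR B * (2 * Y0) + IZR A * (IZR r + IZR r' - 2 * X0) = 2 * IZR B * IZR z).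
Proof.
  intros HB H; injection H; intros Hy Hx.
  apply fold_eq_iff in Hx; apply fold_eq_iff in Hy.
  set (y := fun r : Z => Y0 + IZR A * (IZR r - X0) / IZR B).
  change (congr_pm2 (y r) (y r')) in Hy.
  assert (Hdiff : IZR A * (IZR r - IZR r') = IZR B * (y r - y r')) by (unfold y; field; auto).
  assert (Hsum : IZR B * (2 * Y0) + IZR A * (IZR r + IZR r' - 2 * X0) = IZR B * (y r + y r'))
    by (unfold y; field; auto).
  split.
  - destruct Hx as [z [Hz|Hz]]; [exists z | exists (z - r')%Z];
      apply eq_IZR; rewrite ?minus_IZR, mult_IZR, ?minus_IZR; simpl; lra.
  - destruct Hy as [z [Hz|Hz]]; [left; exists z | right; exists z].
    + apply eq_IZR; rewrite !mult_IZR, minus_IZR, Hdiff, Hz; ring.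
    + rewrite Hsum, Hz; ring.
Qed.

Lemma even_diff_dvd_eq (A B r r' : Z) : (0 < B)%Z -> Z.gcd A B = 1%Z ->
  (0 <= r < 2 * B)%Z -> (0 <= r' < 2 * B)%Z -> (exists e, r - r' = 2 * e)%Z ->
  (exists z, A * (r - r') = 2 * B * z)%Z -> r = r'.
Proof.
  intros HB Hg Hr Hr' [e He] [z Hz].
  assert (Hd : (B | A * e)%Z) by (exists z; nia).
  apply Z.gauss in Hd; [| rewrite Z.gcd_comm; auto].
  destruct Hd as [f ->].
  destruct (Z.lt_trichotomy f 0) as [Hf|[->|Hf]]; nia.
Qed.

(* If [j + j' = B] then [A] is even, and [j = j' mod 2] makes [B] even too. *)
Lemma no_opposite_crossings (A B j j' w : Z) : (0 < B)%Z -> Z.gcd A B = 1%Z ->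
  (1 <= j <= B - 1)%Z -> (1 <= j' <= B - 1)%Z -> (exists e, j - j' = 2 * e)%Z ->
  (A * (j + j') <> 2 * B * w)%Z.
Proof.
  intros HB Hg Hj Hj' [e He] Hw.
  assert (Hd : (B | A * (j + j'))%Z) by (exists (2 * w)%Z; nia).
  apply Z.gauss in Hd; [| rewrite Z.gcd_comm; auto].
  destruct Hd as [f Hf]; assert (f = 1%Z) as -> by nia.
  assert (HA2 : (2 | A)%Z) by (exists w; nia).
  assert (HB2 : (2 | B)%Z) by (exists (j' + e)%Z; nia).
  pose proof (Z.gcd_greatest _ _ _ HA2 HB2) as H2; rewrite Hg in H2.
  apply Z.divide_pos_le in H2; lia.
Qed.

Lemma NoDup_vcross_period X0 Y0 (A B : Z) : (0 < B)%Z -> Z.gcd A B = 1%Z ->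
  ~ (exists z : Z, IZR B * Y0 - IZR A * X0 = IZR z) ->
  NoDup (map (vcross X0 Y0 (IZR A) (IZR B)) (zrange 0 (2 * B))).
Proof.
  intros HB Hg Hgen; apply NoDup_map_zrange; intros r r' Hr Hr' H.
  assert (HBR : IZR B <> 0) by (apply not_0_IZR; lia).
  destruct (vcross_eq_cases X0 Y0 A B r r' HBR H) as [[e He] [Hz | [z Hz]]].
  - apply (even_diff_dvd_eq A B); eauto.
  - exfalso; apply Hgen; exists (B * z - A * (r' + e))%Z.
    replace r with (r' + 2 * e)%Z in Hz by lia.
    rewrite plus_IZR, mult_IZR in Hz; rewrite minus_IZR, !mult_IZR, plus_IZR; nra.
Qed.

Lemma NoDup_vcross_segment (m n A B : Z) : (0 < B)%Z -> Z.gcd A B = 1%Z ->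
  NoDup (map (vcross (IZR m) (IZR n) (IZR A) (IZR B)) (zrange (m + 1) (m + B))).
Proof.
  intros HB Hg; apply NoDup_map_zrange; intros r r' Hr Hr' H.
  assert (HBR : IZR B <> 0) by (apply not_0_IZR; lia).
  destruct (vcross_eq_cases _ _ A B r r' HBR H) as [[e He] [[z Hz] | [z Hz]]].
  - enough (r - m = r' - m)%Z by lia.
    apply (even_diff_dvd_eq A B); try lia; [exists e | exists z]; lia.
  - exfalso; apply (no_opposite_crossings A B (r - m) (r' - m) (z - n)); try lia.
    + exists e; lia.
    + apply eq_IZR; rewrite !mult_IZR, !minus_IZR, plus_IZR, !minus_IZR; simpl; nra.
Qed.

Lemma card_eq_ext {S S' : R * R -> Prop} {n} :
  (forall z, S z <-> S' z) -> card_eq S n -> card_eq S' n.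
Proof.
  intros HS [l [Hl [Hn Hin]]]; exists l; split; [| split]; auto.
  intro z; rewrite Hin; auto.
Qed.

Lemma card_sides (C : R * R -> Prop) (V H : list (R * R)) :
  NoDup V -> NoDup H -> (forall z, In z V -> on_vside z) -> (forall z, In z H -> on_hside z) ->
  (forall z, C z /\ ~ is_vertex z <-> In z (V ++ H)) ->
  card_eq (fun z => C z /\ ~ is_vertex z) (length V + length H) /\
  card_eq (fun z => C z /\ on_hside z /\ ~ is_vertex z) (length H) /\
  card_eq (fun z => C z /\ on_vside z /\ ~ is_vertex z) (length V).
Proof.
  intros HV HH Vv Hh HC.
  assert (Vnv : forall z, In z V -> ~ is_vertex z) by (intros z Hz; apply HC, in_or_app; auto).
  split; [| split].
  - exists (V ++ H); split; [| split; [apply length_app | intros z; symmetry; apply HC]].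
    apply NoDup_app; auto; intros z Hz Hz'.
    apply (Vnv z Hz); split; [apply Vv | apply Hh]; auto.
  - exists H; split; [| split]; auto; intros z; split.
    + intros Hz; destruct (proj2 (HC z) (in_or_app _ _ _ (or_intror Hz))); auto.
    + intros [Cz [Hz Nz]]; destruct (in_app_or _ _ _ (proj1 (HC z) (conj Cz Nz))) as [Hv|]; auto.
      exfalso; exact (Nz (conj (Vv z Hv) Hz)).
  - exists V; split; [| split]; auto; intros z; split.
    + intros Hz; destruct (proj2 (HC z) (in_or_app _ _ _ (or_introl Hz))); auto.
    + intros [Cz [Hz Nz]]; destruct (in_app_or _ _ _ (proj1 (HC z) (conj Cz Nz))) as [|Hv]; auto.
      exfalso; exact (Nz (conj Hz (Hh z Hv))).
Qed.

Section LatticeDirection.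

Variables (g : path) (a b : Z) (k : R).
Hypotheses (Ha : (0 < a)%Z) (Hb : (0 < b)%Z) (Hdc : dc g = IZR b * k) (Hds : ds g = IZR a * k).

Let dc_scaled t : t * dc g = IZR b * (t * k). Proof. rewrite Hdc; ring. Qed.
Let ds_scaled t : t * ds g = IZR a * (t * k). Proof. rewrite Hds; ring. Qed.

Lemma point_scaled t :
  point g t = (fold (px g + IZR b * (t * k)), fold (py g + IZR a * (t * k))).
Proof. unfold point; rewrite dc_scaled, ds_scaled; reflexivity. Qed.

Lemma vtime_scaled t :
  is_vtime g t <-> is_int (px g + IZR b * (t * k)) /\ is_int (py g + IZR a * (t * k)).
Proof. unfold is_vtime, vtime; rewrite dc_scaled, ds_scaled; reflexivity. Qed.

Lemma ctime_cross t : is_ctime g t ->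
  (exists r, px g + IZR b * (t * k) = IZR r /\
             point g t = vcross (px g) (py g) (IZR a) (IZR b) r) \/
  (exists r, py g + IZR a * (t * k) = IZR r /\
             point g t = hcross (px g) (py g) (IZR a) (IZR b) r).
Proof.
  unfold is_ctime, ctime; rewrite dc_scaled, ds_scaled, point_scaled.
  intros [[r Hr] | [r Hr]]; [left | right]; exists r; split; auto.
  - apply vcross_at; auto; apply not_0_IZR; lia.
  - apply hcross_at; auto; apply not_0_IZR; lia.
Qed.

Lemma vcross_ctime t r : px g + IZR b * (t * k) = IZR r ->
  is_ctime g t /\ point g t = vcross (px g) (py g) (IZR a) (IZR b) r.
Proof.
  intros Hr; split.
  - left; rewrite dc_scaled; exists r; auto.
  - rewrite point_scaled; apply vcross_at; auto; apply not_0_IZR; lia.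
Qed.

Lemma hcross_ctime t r : py g + IZR a * (t * k) = IZR r ->
  is_ctime g t /\ point g t = hcross (px g) (py g) (IZR a) (IZR b) r.
Proof.
  intros Hr; split.
  - right; rewrite ds_scaled; exists r; auto.
  - rewrite point_scaled; apply hcross_at; auto; apply not_0_IZR; lia.
Qed.

(* [a x - b y] is constant along the line. *)
Lemma no_vtime_off_lattice t :
  ~ (exists z : Z, IZR a * px g - IZR b * py g = IZR z) -> ~ is_vtime g t.
Proof.
  rewrite vtime_scaled; intros Hgen [[M HM] [N HN]]; apply Hgen.
  exists (a * M - b * N)%Z; rewrite minus_IZR, !mult_IZR, <- HM, <- HN; ring.
Qed.

(* The direction [(b, a)] is primitive: consecutive lattice points are one unit of [t k] apart. *)
Lemma vtime_lattice_iff (m n : Z) t : Z.gcd a b = 1%Z -> px g = IZR m -> py g = IZR n ->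
  is_vtime g t <-> exists z : Z, t * k = IZR z.
Proof.
  intros Hg Hx Hy; rewrite vtime_scaled, Hx, Hy.
  destruct (Zis_gcd_bezout _ _ _ (Zgcd_is_gcd a b)) as [u v Huv]; rewrite Hg in Huv.
  split.
  - intros [[M HM] [N HN]]; exists (u * (N - n) + v * (M - m))%Z.
    assert (Huv' : IZR u * IZR a + IZR v * IZR b = 1)
      by (rewrite <- !mult_IZR, <- plus_IZR, Huv; reflexivity).
    rewrite plus_IZR, !mult_IZR, !minus_IZR, <- HM, <- HN.
    rewrite <- (Rmult_1_r (t * k)) at 1; rewrite <- Huv'; ring.
  - intros [z ->]; split; [exists (m + b * z)%Z | exists (n + a * z)%Z];
      rewrite plus_IZR, mult_IZR; reflexivity.
Qed.

End LatticeDirection.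

Lemma point_shift (g h : path) s0 t : dc h = dc g -> ds h = ds g ->
  px h = px g + s0 * dc g -> py h = py g + s0 * ds g ->
  point h t = point g (t + s0).
Proof. intros Hc Hs Hx Hy; unfold point; rewrite Hc, Hs, Hx, Hy; f_equal; f_equal; ring. Qed.

Lemma vtime_shift (g h : path) s0 t : dc h = dc g -> ds h = ds g ->
  px h = px g + s0 * dc g -> py h = py g + s0 * ds g ->
  is_vtime h t <-> is_vtime g (t + s0).
Proof.
  intros Hc Hs Hx Hy; unfold is_vtime, vtime; rewrite Hc, Hs, Hx, Hy.
  rewrite !Rplus_assoc, <- !Rmult_plus_distr_r, (Rplus_comm s0); reflexivity.
Qed.

Section VertexTimes.

Variables (V : R -> Prop) (k c : R).
Hypotheses (Hk : 0 < k) (Hc : 0 <= c < 1) (HV : forall t, V t <-> exists z : Z, t * k + c = IZR z).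

Lemma next_vertex : 0 < (1 - c) / k /\ V ((1 - c) / k).
Proof.
  split; [apply Rdiv_lt_0_compat; lra |].
  apply HV; exists 1%Z; field; lra.
Qed.

Lemma no_vertex_between s : c < s * k + c < 1 -> ~ V s.
Proof.
  intros Hs Hv; apply HV in Hv as [z Hz]; rewrite Hz in Hs.
  destruct Hs as [Hlo Hhi]; apply lt_IZR in Hhi.
  assert (0 < IZR z) as Hz0%lt_IZR by lra; lia.
Qed.

Lemma forward_free_iff t :
  (0 <= t /\ forall s, 0 < s < t -> ~ V s) <-> 0 <= t /\ t * k + c <= 1.
Proof.
  split; intros [Ht Hfree]; split; auto.
  - destruct (Rle_dec (t * k + c) 1) as [|Hgt]; auto; exfalso.
    destruct next_vertex as [Hpos Hv].
    assert (Hlt : (1 - c) / k < t).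
    { apply (Rmult_lt_reg_r k); auto. replace ((1 - c) / k * k) with (1 - c) by (field; lra). lra. }
    exact (Hfree _ (conj Hpos Hlt) Hv).
  - intros s Hs; apply no_vertex_between; split; nra.
Qed.

Lemma backward_free_bound t : t <= 0 -> ~ V 0 -> (forall s, t < s < 0 -> ~ V s) ->
  0 <= t * k + c <= 1.
Proof.
  intros Ht H0 Hfree.
  assert (Hc0 : c <> 0) by (intros Hc0; apply H0, HV; exists 0%Z; rewrite Hc0; ring).
  split; [| nra].
  destruct (Rle_dec 0 (t * k + c)) as [|Hlt]; auto; exfalso.
  apply (Hfree (- c / k)).
  - split; apply (Rmult_lt_reg_r k); auto; replace (- c / k * k) with (- c) by (field; lra); lra.
  - apply HV; exists 0%Z; field; lra.
Qed.

End VertexTimes.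

Section OffLatticeStart.

Variables (a b : Z) (k P0 al : R).
Hypotheses (Ha : (0 < a)%Z) (Hb : (0 < b)%Z) (Hg : Z.gcd a b = 1%Z) (Hk : 0 < k)
  (Hc : cos al = IZR b * k) (Hs : sin al = IZR a * k)
  (Hgen : ~ exists z : Z, IZR a * P0 = IZR z).

Let g := traj P0 al.
Let V := map (vcross P0 0 (IZR a) (IZR b)) (zrange 0 (2 * b)).
Let H := map (hcross P0 0 (IZR a) (IZR b)) (zrange 0 (2 * a)).

Lemma off_lattice_no_vtime t : ~ is_vtime g t.
Proof.
  apply (no_vtime_off_lattice g a b k Hc Hs); simpl.
  intros [z Hz]; apply Hgen; exists z; lra.
Qed.

Lemma off_lattice_dom t : dom g t.
Proof.
  pose proof off_lattice_no_vtime as Hno; simpl.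
  destruct (Rle_dec 0 t); [left | right]; repeat split; try lra; intros; apply Hno.
Qed.

Lemma off_lattice_coll_iff z : coll_points g z <-> In z (V ++ H).
Proof.
  rewrite in_app_iff; split.
  - intros (t & _ & Hct & ->).
    destruct (ctime_cross g a b k Ha Hb Hc Hs t Hct) as [(r & _ & ->) | (r & _ & ->)];
      simpl; [left | right].
    + rewrite <- vcross_mod by lia; apply in_map, in_zrange.
      apply Z.mod_pos_bound; lia.
    + rewrite hcross_swap, <- vcross_mod, <- hcross_swap by lia; apply in_map, in_zrange.
      apply Z.mod_pos_bound; lia.
  - intros [Hz | Hz]; apply in_map_iff in Hz as (r & <- & _).
    + destruct (vcross_ctime g a b k Hb Hc Hs ((IZR r - P0) / IZR b / k) r) as [Hct Hpt].
      { simpl; field; split; try lra; apply not_0_IZR; lia. }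
      exists ((IZR r - P0) / IZR b / k); split; [apply off_lattice_dom | auto].
    + destruct (hcross_ctime g a b k Ha Hc Hs (IZR r / IZR a / k) r) as [Hct Hpt].
      { simpl; field; split; try lra; apply not_0_IZR; lia. }
      exists (IZR r / IZR a / k); split; [apply off_lattice_dom | auto].
Qed.

Lemma off_lattice_coll_nonvertex z : coll_points g z -> ~ is_vertex z.
Proof. intros (t & _ & _ & ->); rewrite is_vertex_point; apply off_lattice_no_vtime. Qed.

Lemma off_lattice_periodic : periodic g.
Proof.
  split.
  - intros (t & _ & Hv); exact (off_lattice_no_vtime t Hv).
  - exists (2 / k); split; [apply Rdiv_lt_0_compat; lra |].
    intros t _; split; [apply off_lattice_dom |].
    rewrite !(point_scaled g a b k Hc Hs); f_equal; apply fold_eq_iff;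
      [exists b | exists a]; left; field; lra.
Qed.

Lemma off_lattice_in_class : in_class (Z.to_nat (2 * a + 2 * b)) (Z.to_nat (2 * a)) g.
Proof.
  assert (HV : NoDup V).
  { apply NoDup_vcross_period; auto; intros [z Hz]; apply Hgen; exists (- z)%Z.
    rewrite opp_IZR, <- Hz; ring. }
  assert (HH : NoDup H).
  { unfold H; rewrite map_hcross; apply NoDup_map_swap, NoDup_vcross_period; auto.
    - rewrite Z.gcd_comm; auto.
    - intros [z Hz]; apply Hgen; exists z; rewrite <- Hz; ring. }
  destruct (card_sides (coll_points g) V H HV HH) as (Hall & Hh & Hv).
  - intros z Hz; apply in_map_iff in Hz as (r & <- & _); apply vcross_on_vside.
  - intros z Hz; apply in_map_iff in Hz as (r & <- & _); apply hcross_on_hside.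
  - intros z; rewrite <- off_lattice_coll_iff; split; [tauto |].
    intros Hz; split; auto; apply off_lattice_coll_nonvertex; auto.
  - unfold V, H in *; rewrite !length_map, !length_zrange in *.
    split; [apply off_lattice_periodic | split; [| split]].
    + replace (Z.to_nat (2 * a + 2 * b)) with (Z.to_nat (2 * b - 0) + Z.to_nat (2 * a - 0))%nat
        by lia.
      eapply card_eq_ext; [| exact Hall]; intros z; split; [tauto |].
      intros Hz; split; auto; apply off_lattice_coll_nonvertex; auto.
    + replace (Z.to_nat (2 * a)) with (Z.to_nat (2 * a - 0)) by lia; exact Hh.
    + replace (Z.to_nat (2 * a + 2 * b) - Z.to_nat (2 * a))%nat with (Z.to_nat (2 * b - 0))
        by lia; exact Hv.
Qed.

End OffLatticeStart.

Lemma not_int_unit_interval s : 0 < s < 1 -> ~ exists z : Z, s = IZR z.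
Proof.
  intros [H0 H1] [z ->]; apply lt_IZR in H0; apply lt_IZR in H1; lia.
Qed.

Lemma crossing_inside (X0 B r : Z) s : (0 < B)%Z -> IZR X0 + IZR B * s = IZR r ->
  0 <= s <= 1 -> ~ (exists z : Z, s = IZR z) -> (X0 < r < X0 + B)%Z.
Proof.
  intros HB Hr Hs Hnot.
  assert (HBR : 0 < IZR B) by (apply IZR_lt; lia).
  assert (IZR X0 <= IZR r <= IZR (X0 + B)) as [Hlo Hhi] by (rewrite plus_IZR; nra).
  apply le_IZR in Hlo; apply le_IZR in Hhi.
  destruct (Z.eq_dec r X0) as [->|]; [exfalso; apply Hnot; exists 0%Z; nra |].
  destruct (Z.eq_dec r (X0 + B)) as [->|]; [exfalso; apply Hnot; exists 1%Z | lia].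
  rewrite plus_IZR in Hr; nra.
Qed.

Lemma crossing_param_unit (X0 B r : Z) : (X0 < r < X0 + B)%Z ->
  0 < (IZR r - IZR X0) / IZR B < 1.
Proof.
  intros Hr; assert (HB : 0 < IZR B) by (apply IZR_lt; lia).
  assert (IZR X0 < IZR r < IZR X0 + IZR B) as [Hlo Hhi]
    by (rewrite <- plus_IZR; split; apply IZR_lt; lia).
  split; [apply Rdiv_lt_0_compat; lra |].
  apply (Rmult_lt_reg_r (IZR B)); auto; field_simplify; lra.
Qed.

Lemma lattice_vertex_below (a b l : Z) : (0 < a)%Z -> Z.gcd a b = 1%Z ->
  exists n0 m0 : Z, (- a < n0 <= 0)%Z /\ (l + b * n0 = a * m0)%Z.
Proof.
  intros Ha Hg.
  destruct (Zis_gcd_bezout _ _ _ (Zgcd_is_gcd a b)) as [u v Huv]; rewrite Hg in Huv.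
  exists (- ((l * v) mod a))%Z, (l * u + b * ((l * v) / a))%Z; split.
  - pose proof (Z.mod_pos_bound (l * v) a Ha); lia.
  - pose proof (Z.div_mod (l * v) a ltac:(lia)).
    assert (l = l * (u * a + v * b))%Z by (rewrite Huv; ring); nia.
Qed.

Section LatticeStart.

Variables (a b : Z) (k al : R) (l n0 m0 : Z).
Hypotheses (Ha : (0 < a)%Z) (Hb : (0 < b)%Z) (Hg : Z.gcd a b = 1%Z) (Hk : 0 < k)
  (Hc : cos al = IZR b * k) (Hs : sin al = IZR a * k)
  (Hn0 : (- a < n0 <= 0)%Z) (Hm0 : (l + b * n0 = a * m0)%Z).

Let g := diag m0 n0 al.
Let h := traj (IZR l / IZR a) al.
(* [g] passes through the start point (l / a, 0) of [h] when [t k = c]. *)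
Let c := - IZR n0 / IZR a.
Let V := map (vcross (IZR m0) (IZR n0) (IZR a) (IZR b)) (zrange (m0 + 1) (m0 + b)).
Let H := map (hcross (IZR m0) (IZR n0) (IZR a) (IZR b)) (zrange (n0 + 1) (n0 + a)).

Let aR : 0 < IZR a. Proof. apply IZR_lt; lia. Qed.
Let bR : 0 < IZR b. Proof. apply IZR_lt; lia. Qed.

Let c_range : 0 <= c < 1.
Proof.
  assert (Hn0R : IZR (- a) < IZR n0 <= 0) by (split; [apply IZR_lt | apply IZR_le]; lia).
  rewrite opp_IZR in Hn0R; unfold c; split.
  - apply Rmult_le_pos; [lra | left; apply Rinv_0_lt_compat; lra].
  - apply (Rmult_lt_reg_r (IZR a)); auto; field_simplify; lra.
Qed.

Lemma diag_vtime_iff t : is_vtime g t <-> exists z : Z, t * k = IZR z.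
Proof. apply (vtime_lattice_iff g a b k Hc Hs m0 n0 t Hg); reflexivity. Qed.

Lemma diag_dom_iff t : dom g t <-> 0 <= t /\ t * k <= 1.
Proof.
  replace (t * k) with (t * k + 0) by ring.
  apply (forward_free_iff (is_vtime g) k 0 Hk ltac:(lra)).
  intros s; rewrite diag_vtime_iff, Rplus_0_r; reflexivity.
Qed.

Let h_on_g_line :
  dc h = dc g /\ ds h = ds g /\ px h = px g + c / k * dc g /\ py h = py g + c / k * ds g.
Proof.
  assert (Hm0R : IZR l + IZR b * IZR n0 = IZR a * IZR m0)
    by (rewrite <- !mult_IZR, <- plus_IZR, Hm0; reflexivity).
  simpl; rewrite Hc, Hs; unfold c; repeat split; field_simplify; try lra.
  apply (Rmult_eq_reg_l (IZR a)); [field_simplify; lra | lra].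
Qed.

Lemma traj_vtime_iff t : is_vtime h t <-> exists z : Z, t * k + c = IZR z.
Proof.
  destruct h_on_g_line as (Hdc & Hds & Hx & Hy).
  rewrite (vtime_shift g h (c / k) t Hdc Hds Hx Hy), diag_vtime_iff.
  replace ((t + c / k) * k) with (t * k + c) by (field; lra); reflexivity.
Qed.

Lemma lattice_start_singular : singular h.
Proof.
  destruct (next_vertex (is_vtime h) k c Hk c_range traj_vtime_iff) as [Hpos Hv].
  exists ((1 - c) / k); split; [left | exact Hv].
  apply (forward_free_iff (is_vtime h) k c Hk c_range traj_vtime_iff); split; [lra |].
  right; field; lra.
Qed.

Lemma lattice_start_points z : points h z -> points g z.
Proof.
  destruct h_on_g_line as (Hdc & Hds & Hx & Hy).
  intros (t & Hd & ->).
  assert (Hr : 0 <= t * k + c <= 1).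
  { destruct Hd as [Hf | (Ht & H0 & Hf)].
    - apply (forward_free_iff (is_vtime h) k c Hk c_range traj_vtime_iff) in Hf; nra.
    - exact (backward_free_bound (is_vtime h) k c Hk c_range traj_vtime_iff t Ht H0 Hf). }
  exists (t + c / k); split; [| apply point_shift; auto].
  apply diag_dom_iff; replace ((t + c / k) * k) with (t * k + c) by (field; lra).
  split; [| lra].
  replace (t + c / k) with ((t * k + c) / k) by (field; lra).
  apply Rmult_le_pos; [lra | left; apply Rinv_0_lt_compat; lra].
Qed.

Lemma interior_ncoll s : 0 < s < 1 -> is_ctime g (s / k) -> ncoll g (point g (s / k)).
Proof.
  intros Hs01 Hct; split.
  - exists (s / k); split; [| split; [exact Hct | reflexivity]].
    apply diag_dom_iff; replace (s / k * k) with s by (field; lra); split; [| lra].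
    left; apply Rdiv_lt_0_compat; lra.
  - rewrite is_vertex_point, diag_vtime_iff.
    replace (s / k * k) with s by (field; lra); apply not_int_unit_interval; auto.
Qed.

Lemma diag_ncoll_iff z : ncoll g z <-> In z (V ++ H).
Proof.
  rewrite in_app_iff; split.
  - intros [(t & Hd & Hct & ->) Hnv].
    rewrite is_vertex_point, diag_vtime_iff in Hnv; apply diag_dom_iff in Hd.
    assert (Htk : 0 <= t * k <= 1) by nra.
    destruct (ctime_cross g a b k Ha Hb Hc Hs t Hct) as [(r & Hr & ->) | (r & Hr & ->)];
      [left | right]; apply in_map, in_zrange; eapply crossing_inside in Hr; eauto; lia.
  - intros [Hz | Hz]; apply in_map_iff in Hz as (r & <- & Hr); apply in_zrange in Hr.
    + pose proof (crossing_param_unit m0 b r ltac:(lia)) as Hs01.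
      set (s := (IZR r - IZR m0) / IZR b) in Hs01.
      destruct (vcross_ctime g a b k Hb Hc Hs (s / k) r) as [Hct Hpt].
      { simpl; unfold s; field; lra. }
      simpl (px g) in Hpt; simpl (py g) in Hpt; rewrite <- Hpt; apply interior_ncoll; auto.
    + pose proof (crossing_param_unit n0 a r ltac:(lia)) as Hs01.
      set (s := (IZR r - IZR n0) / IZR a) in Hs01.
      destruct (hcross_ctime g a b k Ha Hc Hs (s / k) r) as [Hct Hpt].
      { simpl; unfold s; field; lra. }
      simpl (px g) in Hpt; simpl (py g) in Hpt; rewrite <- Hpt; apply interior_ncoll; auto.
Qed.

Lemma lattice_start_diag :
  singular h /\
  exists g' : path, is_gen_diag g' /\ (forall z, points h z -> points g' z) /\
    gd_length g' (Z.to_nat (a - 1 + (b - 1))) /\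
    card_eq (hcoll g') (Z.to_nat (a - 1)) /\ card_eq (vcoll g') (Z.to_nat (b - 1)).
Proof.
  split; [exact lattice_start_singular |].
  assert (HV : NoDup V) by (apply NoDup_vcross_segment; auto).
  assert (HH : NoDup H).
  { unfold H; rewrite map_hcross; apply NoDup_map_swap, NoDup_vcross_segment; auto.
    rewrite Z.gcd_comm; auto. }
  destruct (card_sides (coll_points g) V H HV HH) as (Hall & Hh & Hv).
  - intros z Hz; apply in_map_iff in Hz as (r & <- & _); apply vcross_on_vside.
  - intros z Hz; apply in_map_iff in Hz as (r & <- & _); apply hcross_on_hside.
  - exact diag_ncoll_iff.
  - exists g; unfold V, H in *; rewrite !length_map, !length_zrange in *.
    repeat split.
    + exists m0, n0, al; repeat split; [rewrite Hc | rewrite Hs];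
        apply Rmult_integral_contrapositive_currified; lra.
    + exact lattice_start_points.
    + replace (Z.to_nat (a - 1 + (b - 1))) with
        (Z.to_nat (m0 + b - (m0 + 1)) + Z.to_nat (n0 + a - (n0 + 1)))%nat by lia.
      exact Hall.
    + replace (Z.to_nat (a - 1)) with (Z.to_nat (n0 + a - (n0 + 1))) by lia; exact Hh.
    + replace (Z.to_nat (b - 1)) with (Z.to_nat (m0 + b - (m0 + 1))) by lia; exact Hv.
Qed.

End LatticeStart.

Lemma lattice_start_case (a b : Z) (k P0 al : R) (L : Z) :
  (0 < a)%Z -> (0 < b)%Z -> Z.gcd a b = 1%Z -> 0 < k ->
  cos al = IZR b * k -> sin al = IZR a * k -> IZR a * P0 = IZR L ->
  singular (traj P0 al) /\
  exists g : path, is_gen_diag g /\ (forall z, points (traj P0 al) z -> points g z) /\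
    gd_length g (Z.to_nat (a - 1 + (b - 1))) /\
    card_eq (hcoll g) (Z.to_nat (a - 1)) /\ card_eq (vcoll g) (Z.to_nat (b - 1)).
Proof.
  intros Ha Hb Hg Hk Hc Hs HL.
  assert (aR : IZR a <> 0) by (apply not_0_IZR; lia).
  replace P0 with (IZR L / IZR a) by (rewrite <- HL; field; auto).
  destruct (lattice_vertex_below a b L Ha Hg) as (n0 & m0 & Hn0 & Hm0).
  exact (lattice_start_diag a b k al L n0 m0 Ha Hb Hg Hk Hc Hs Hn0 Hm0).
Qed.

Lemma slope_decomposition (p q : nat) (alpha : R) :
  (0 < p)%nat -> (0 < q)%nat -> Nat.gcd p q = 2%nat ->
  0 < alpha < PI / 2 -> tan alpha = INR p / INR q ->
  exists (a b : Z) (k : R), (0 < a)%Z /\ (0 < b)%Z /\ Z.gcd a b = 1%Z /\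
    p = (Z.to_nat a * 2)%nat /\ q = (Z.to_nat b * 2)%nat /\
    0 < k /\ cos alpha = IZR b * k /\ sin alpha = IZR a * k.
Proof.
  intros Hp Hq Hgcd Hal Htan.
  destruct (Nat.gcd_divide_l p q) as [a' Ha']; destruct (Nat.gcd_divide_r p q) as [b' Hb'].
  rewrite Hgcd in Ha', Hb'; subst p q.
  assert (Hg' : Nat.gcd a' b' = 1%nat) by (rewrite Nat.gcd_mul_mono_r in Hgcd; lia).
  destruct (Nat.gcd_bezout_pos a' b' ltac:(lia)) as (u & v & Huv); rewrite Hg' in Huv.
  assert (Hcos : 0 < cos alpha) by (apply cos_gt_0; lra).
  assert (Hsin : 0 < sin alpha) by (apply sin_gt_0; lra).
  assert (bR : 0 < INR b') by (apply lt_0_INR; lia).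
  exists (Z.of_nat a'), (Z.of_nat b'), (cos alpha / INR b').
  rewrite <- !INR_IZR_INZ, !Nat2Z.id; repeat split; try lia.
  - apply Zgcd_1_rel_prime, bezout_rel_prime.
    exists (Z.of_nat u) (- Z.of_nat v)%Z; lia.
  - apply Rdiv_lt_0_compat; lra.
  - field; lra.
  - unfold tan in Htan; rewrite !mult_INR in Htan.
    apply (Rmult_eq_reg_r (/ cos alpha)); [| apply Rinv_neq_0_compat; lra].
    change (sin alpha * / cos alpha) with (sin alpha / cos alpha); rewrite Htan.
    simpl; field; lra.
Qed.

Lemma lattice_start_iff (a : Z) (P0 : R) : (0 < a)%Z -> 0 <= P0 < 1 ->
  (exists l : nat, (l < Z.to_nat a * 2 / 2)%nat /\ P0 = 2 * INR l / INR (Z.to_nat a * 2)) <->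
  exists L : Z, IZR a * P0 = IZR L.
Proof.
  intros Ha HP0; rewrite Nat.div_mul by lia.
  assert (aR : 0 < IZR a) by (apply IZR_lt; lia).
  assert (Hp : INR (Z.to_nat a * 2) = 2 * IZR a)
    by (rewrite mult_INR, INR_IZR_INZ, Z2Nat.id by lia; simpl; ring).
  rewrite Hp; split.
  - intros (l & _ & ->); exists (Z.of_nat l); rewrite <- INR_IZR_INZ; field; lra.
  - intros [L HL].
    assert (HLa : (0 <= L < a)%Z) by (split; [apply le_IZR | apply lt_IZR]; nra).
    exists (Z.to_nat L); split; [lia |].
    rewrite INR_IZR_INZ, Z2Nat.id, <- HL by lia; field; lra.
Qed.

Theorem mainTheorem10 (p q : nat) (P0 alpha0 : R) :
  (0 < p)%nat -> (0 < q)%nat -> Nat.gcd p q = 2%nat ->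
  0 < alpha0 < PI / 2 -> tan alpha0 = INR p / INR q ->
  0 <= P0 < 1 ->
  ((exists l : nat, (l < p / 2)%nat /\ P0 = 2 * INR l / INR p) ->
     singular (traj P0 alpha0) /\
     exists g : path, is_gen_diag g /\
       (forall z, points (traj P0 alpha0) z -> points g z) /\
       gd_length g ((p + q) / 2 - 2) /\
       card_eq (hcoll g) (p / 2 - 1) /\
       card_eq (vcoll g) (q / 2 - 1))
  /\
  (~ (exists l : nat, (l < p / 2)%nat /\ P0 = 2 * INR l / INR p) ->
     in_class (p + q) p (traj P0 alpha0)).
Proof.
  intros Hp Hq Hgcd Hal Htan HP0.
  destruct (slope_decomposition p q alpha0 Hp Hq Hgcd Hal Htan)
    as (a & b & k & Ha & Hb & Hg & -> & -> & Hk & Hc & Hs).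
  rewrite (lattice_start_iff a P0 Ha HP0), <- Nat.mul_add_distr_r, !Nat.div_mul by lia.
  split.
  - intros [L HL].
    replace (Z.to_nat a + Z.to_nat b - 2)%nat with (Z.to_nat (a - 1 + (b - 1))) by lia.
    replace (Z.to_nat a - 1)%nat with (Z.to_nat (a - 1)) by lia.
    replace (Z.to_nat b - 1)%nat with (Z.to_nat (b - 1)) by lia.
    exact (lattice_start_case a b k P0 alpha0 L Ha Hb Hg Hk Hc Hs HL).
  - intros Hgen.
    replace ((Z.to_nat a + Z.to_nat b) * 2)%nat with (Z.to_nat (2 * a + 2 * b)) by lia.
    replace (Z.to_nat a * 2)%nat with (Z.to_nat (2 * a)) by lia.
    exact (off_lattice_in_class a b k P0 alpha0 Ha Hb Hg Hk Hc Hs Hgen).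
Qed.
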